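(* Let $a > 3$ be irrational and let $t$ be a positive integer. Define \[ U = \#\left\{(x,y)\in\mathbb{Z}^2 : x \ge 0,\ x + a y \ge \tfrac{t(a+3)}{12},\ x + 3y \le \tfrac{t}{2}\right\}, \] \[ D = \#\left\{(x,y)\in\mathbb{Z}^2 : y \ge 0,\ x + 3y \ge \tfrac{t}{2},\ x + a y \le \tfrac{t(a+3)}{12}\right\}. \] Then $U \le D$. Moreover, if $t \equiv 4 \pmod{12}$, then $U \le D - 1$.
   Context: Geometrically, $U$ counts lattice points in the region bounded by the $y$-axis, the line $L_1: \frac{12}{a+3}x + \frac{12a}{a+3}y = t$ and the line $L_2: 2x+6y=t$ (lying above $L_1$ and on or below $L_2$), and $D$ counts lattice points in the region bounded by $L_1$, $L_2$ and the $x$-axis (on or above $L_2$ and below $L_1$); the lines $L_1$, $L_2$ meet at $(t/4, t/12)$. *)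

From HB Require Import structures.
From mathcomp Require Import all_boot all_order all_algebra.
From mathcomp Require Import finmap boolp classical_sets cardinality reals.
Set Implicit Arguments. Unset Strict Implicit. Unset Printing Implicit Defensive.
Import Order.TTheory GRing.Theory Num.Theory.
Local Open Scope ring_scope.
Local Open Scope classical_set_scope.


Definition U_set (R : realType) (a : R) (t : nat) : set (int * int) :=
  [set p | 0 <= p.1 /\
           (t%:R * (a + 3)) / 12 <= p.1%:~R + a * p.2%:~R /\
           p.1%:~R + 3 * p.2%:~R <= (t%:R : R) / 2].

Definition D_set (R : realType) (a : R) (t : nat) : set (int * int) :=
  [set p | 0 <= p.2 /\
           (t%:R : R) / 2 <= p.1%:~R + 3 * p.2%:~R /\
           p.1%:~R + a * p.2%:~R <= (t%:R * (a + 3)) / 12].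

(* Number of elements of a (finite) set of lattice points; both sets above
   are bounded triangles, hence finite, so fset_set is their exact content. *)
Definition lat_count (A : set (int * int)) : nat := (#|` fset_set A|)%fset.

Definition U_count (R : realType) (a : R) (t : nat) : nat := lat_count (U_set a t).
Definition D_count (R : realType) (a : R) (t : nat) : nat := lat_count (D_set a t).

From HB Require Import structures.
From mathcomp Require Import all_boot all_order all_algebra.
From mathcomp Require Import finmap boolp classical_sets cardinality reals.
From mathcomp Require Import zify ring lra.
Import Order.TTheory GRing.Theory Num.Theory.
Local Open Scope ring_scope.
Local Open Scope classical_set_scope.

(* Write u = x + 3y for the "level" of a lattice point (x, y): the line L2 is
   u = t/2, and L1 is u + (a - 3) y = t/2 + (a - 3) t/12.  The map
       reflect (x, y) = (x', y')  with  x' + 3y' = t - u,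
                                        y' = y - ceil(t/12 + (t/2 - u)/(a - 3))
   reflects the level through t/2 and then slides the point down along its
   new level line by the least integer amount that puts it on or below L1.
   It is injective (the level and then y are recovered) and sends the region
   counted by U into the region counted by D.  When t = 12k + 4, the lattice
   point (3k + 2, k) of D lies on L2 and is never hit, which gives one more. *)

Lemma card_fset_set_inj {T U : choiceType} {A : set T} {B : set U}
    {f : T -> U} :
  injective f -> f @` A `<=` B -> finite_set B ->
  (#|` fset_set A| <= #|` fset_set B|)%N.
Proof.
move=> f_inj fAB finB.
have finfA : finite_set (f @` A) := sub_finite_set fAB finB.
have finA : finite_set A by rewrite -(eq_finite_set (inj_card_eq (in2W f_inj))).
have <- : #|` (f @` fset_set A)%fset| = #|` fset_set A| by rewrite card_imfset.
rewrite -fset_set_image //.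
by apply: fsubset_leq_card; rewrite -fset_set_sub.
Qed.

Lemma card_fset_set_inj_lt {T U : choiceType} {A : set T} {B : set U}
    {f : T -> U} (b : U) :
  injective f -> f @` A `<=` B `\ b -> finite_set B -> B b ->
  (#|` fset_set A| + 1 <= #|` fset_set B|)%N.
Proof.
move=> f_inj fAB finB Bb.
rewrite (cardfsD1 b) in_fset_set // mem_set // addnC leq_add2l -fset_setD1 //.
by apply: (card_fset_set_inj f_inj fAB); apply: finite_setD.
Qed.

Lemma square_finite (M : nat) :
  finite_set [set p : int * int | (0 <= p.1 <= M%:Z) /\ (0 <= p.2 <= M%:Z)].
Proof.
apply: (sub_finite_set _ (finite_image (fun ij : nat * nat => (ij.1%:Z, ij.2%:Z))
  (finite_setX (finite_II M.+1) (finite_II M.+1)))).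
move=> [x y] /= [/andP[x0 xM] /andP[y0 yM]].
exists (`|x|%N, `|y|%N); last by congr pair; rewrite gez0_abs.
split => /=; lia.
Qed.

Definition level (p : int * int) : int := p.1 + 3 * p.2.

Lemma level_real (R : pzRingType) (p : int * int) :
  (level p)%:~R = p.1%:~R + 3 * p.2%:~R :> R.
Proof. by rewrite /level intrD intrM. Qed.

Section Reflection.
Variables (R : realType) (a : R) (t : nat).

Definition slide (p : int * int) : int :=
  Num.ceil (t%:R / 12 + (t%:R / 2 - (level p)%:~R) / (a - 3) : R).

Definition reflect (p : int * int) : int * int :=
  (t%:Z - level p - 3 * (p.2 - slide p), p.2 - slide p).

Lemma level_reflect (p : int * int) : level (reflect p) = t%:Z - level p.
Proof. rewrite /reflect /level /=; lia. Qed.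

Lemma reflect_inj : injective reflect.
Proof.
move=> [x1 y1] [x2 y2] e.
have e_level : level (x1, y1) = level (x2, y2).
  by move: (congr1 level e); rewrite !level_reflect; lia.
have e_slide : slide (x1, y1) = slide (x2, y2) by rewrite /slide e_level.
have e_y : y1 = y2 by move: (congr1 snd e); rewrite /= e_slide; lia.
by move: e_level; rewrite /level /= e_y => ?; congr pair; lia.
Qed.

(* Points of D lie in the triangle 0 <= y <= t/12, 0 <= x <= t(a+3)/12. *)
Lemma D_finite : 3 < a -> finite_set (D_set a t).
Proof.
move=> a_gt3.
apply: (sub_finite_set _ (square_finite `|Num.ceil (t%:R * (a + 3) / 12 : R)|)).
move=> [x y] [/= y_ge0 [above_L2 below_L1]].
set T : R := t%:R in above_L2 below_L1 *.
set X : R := x%:~R in above_L2 below_L1.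
set Y : R := y%:~R in above_L2 below_L1.
have T_ge0 : 0 <= T by rewrite ler0n.
have Y_ge0 : 0 <= Y by rewrite ler0z.
have Y_le : Y <= T / 12.
  rewrite leNgt; apply/negP => Y_gt.
  have : (a - 3) * (T / 12) < (a - 3) * Y by rewrite ltr_pM2l ?subr_gt0.
  lra.
have aY_ge0 : 0 <= a * Y by apply: mulr_ge0 => //; lra.
have X_ge0 : 0 <= X by lra.
have bound n :
    n%:~R <= T * (a + 3) / 12 -> n <= `|Num.ceil (T * (a + 3) / 12)|%N%:Z.
  move=> n_le; apply: le_trans (ler_norm _).
  by rewrite -(@ler_int R); apply: le_trans n_le (ceil_ge _).
have x_ge0 : 0 <= x by rewrite -(@ler_int R).
by rewrite x_ge0 y_ge0 !bound // -?/X -?/Y; lra.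
Qed.

(* Writing Q for the real
   number rounded up by [slide], the point of level u above L1 satisfies
   Q <= y, so the image stays on or above the x-axis; since its new level
   t - u is at least t/2 it lies on or above L2; and rounding Q up pushes it
   on or below L1 because y <= t/6 for points of U. *)
Lemma reflect_U_D : 3 < a -> reflect @` U_set a t `<=` D_set a t.
Proof.
move=> a_gt3 _ [[x y] [/= x_ge0 [above_L1 below_L2]] <-].
have a3_gt0 : 0 < a - 3 by rewrite subr_gt0.
set T : R := t%:R in above_L1 below_L2 *.
set X : R := x%:~R in above_L1 below_L2.
set Y : R := y%:~R in above_L1 below_L2.
have X_ge0 : 0 <= X by rewrite ler0z.
have u_def : (level (x, y))%:~R = X + 3 * Y :> R by rewrite level_real.
pose Q : R := T / 12 + (T / 2 - (level (x, y))%:~R) / (a - 3).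
have Q_eq : (a - 3) * Q = (a - 3) * (T / 12) + T / 2 - (X + 3 * Y).
  by rewrite /Q u_def; field; rewrite lt0r_neq0.
have Q_le_Y : Q <= Y by rewrite -(ler_pM2l a3_gt0) Q_eq; lra.
have slide_le_y : slide (x, y) <= y.
  by rewrite /slide ceil_le_int; exact: Q_le_Y.
pose C : R := (slide (x, y))%:~R.
have Q_le_C : Q <= C := ceil_ge _.
have key : (a - 3) * (Y - C) <= (a - 3) * (T / 6 - Q).
  by apply: ler_wpM2l; [exact: ltW | lra].
pose q := reflect (x, y).
have q_level : q.1%:~R + 3 * q.2%:~R = T - (X + 3 * Y) :> R.
  by rewrite -level_real level_reflect intrB u_def.
have q_y : q.2%:~R = Y - C :> R by rewrite /= intrB.
rewrite /D_set -/q /= subr_ge0 slide_le_y q_y.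
split=> //; lra.
Qed.

(* For t = 12k + 4, the lattice point (3k + 2, k) on L2 just below the
   corner (t/4, t/12) where L1 and L2 meet. *)
Definition corner (k : nat) : int * int := (3 * k%:Z + 2, k%:Z).

Lemma corner_in_D (k : nat) :
  3 < a -> t = (12 * k + 4)%N -> D_set a t (corner k).
Proof.
move=> a_gt3 ->; rewrite /D_set /= natrD natrM !intrD !intrM.
have -> : (k%:Z)%:~R = k%:R :> R by [].
by split=> //; lra.
Qed.

(* A preimage of the corner would have level t/2, hence slide
   ceil(k + 1/3) = k + 1, hence y = 2k + 1 and level >= 3y > t/2. *)
Lemma corner_not_reflected (k : nat) :
  t = (12 * k + 4)%N -> ~ (reflect @` U_set a t) (corner k).
Proof.
move=> t_def [[x y] [/= x_ge0 _] e].
have e_level : level (x, y) = 6 * k%:Z + 2.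
  by move: (congr1 level e); rewrite level_reflect t_def /level /=; lia.
have slide_gt : k%:Z < slide (x, y).
  rewrite /slide ceil_gt_int e_level t_def intrD intrM natrD natrM.
  have -> : (k%:Z)%:~R = k%:R :> R by [].
  have -> : ((12 * k%:R + 4%:R) / 2 - (6 * k%:R + 2)) = 0 :> R by field.
  by rewrite mul0r addr0; lra.
by move: (congr1 snd e) e_level; rewrite /level /=; lia.
Qed.

End Reflection.

Theorem lemma2p9 (R : realType) (a : R) (t : nat) :
  3 < a -> @irrational R a -> (0 < t)%N ->
  (U_count a t <= D_count a t)%N /\
  ((t %% 12)%N = 4%N -> (U_count a t + 1 <= D_count a t)%N).
Proof.
move=> a_gt3 _ _; rewrite /U_count /D_count /lat_count.
have fin_D := D_finite R a t a_gt3.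
split.
  exact: card_fset_set_inj (reflect_inj R a t) (reflect_U_D R a t a_gt3) fin_D.
move=> t_mod; set k := (t %/ 12)%N.
have t_def : t = (12 * k + 4)%N by rewrite {1}(divn_eq t 12) t_mod mulnC.
apply: (card_fset_set_inj_lt (corner k) (reflect_inj R a t) _ fin_D).
- move=> q Uq; split; first exact: reflect_U_D Uq.
  move=> /= q_corner; apply: (corner_not_reflected R a t k t_def).
  by rewrite -q_corner.
- exact: corner_in_D a_gt3 t_def.
Qed.
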